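(* Let $\rho_{AB}$ be a state on a finite-dimensional bipartite system $A\otimes B$. Then $$Q^{AB}_{\mathcal N}(\rho_{AB})=\min_{\sigma\in\mathcal{CC}}\frac12\|\rho_{AB}-\sigma\|_{l_1}^{\mathcal B_\sigma},$$ where for $\sigma\in\mathcal{CC}$ the $l_1$-norm is computed in a product eigenbasis $\mathcal B_\sigma=\{|a_i\rangle\otimes|b_k\rangle\}$ of $\sigma$ (chosen optimally, i.e. the minimum is also over all product orthonormal bases in which $\sigma$ is diagonal).
   Context: $\mathcal{CC}$ (classical-classical states) is the set of states of the form $\sigma=\sum_{i,k}p_{ik}|a_i\rangle\langle a_i|\otimes|b_k\rangle\langle b_k|$ with $\{|a_i\rangle\}$, $\{|b_k\rangle\}$ orthonormal bases of $A$, $B$ and $(p_{ik})$ a probability distribution. For a matrix $X$ and orthonormal basis $\{|e_k\rangle\}$, $\|X\|_{l_1}=\sum_{k,l}|\langle e_k|X|e_l\rangle|$. Negativity: $\mathcal N_{X:Y}(\tau)=(\|\tau^\Gamma\|_1-1)/2$, $\tau^\Gamma$ partial transpose on one party, $\|\cdot\|_1$ trace norm. For a system $S$ of dimension $m$ with orthonormal basis $\{|s_k\rangle\}$, the measurement interaction is the isometry $V_S:S\to S\otimes S'$ ($S'$ $m$-dimensional, computational basis $\{|k\rangle\}$), $V_S|s_k\rangle=|s_k\rangle|k\rangle$. Two-sided negativity of quantumness: $Q^{AB}_{\mathcal N}(\rho_{AB})=\min\mathcal N_{AB:A'B'}\big((V_A\otimes V_B)\rho_{AB}(V_A\otimes V_B)^\dagger\big)$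 over orthonormal bases of $A$ and $B$. *)

From HB Require Import structures.
From mathcomp Require Import all_boot all_order all_algebra.
From mathcomp Require Import complex mxtens.
From mathcomp Require Import classical_sets reals.

Set Implicit Arguments.
Unset Strict Implicit.
Unset Printing Implicit Defensive.

Import Order.TTheory GRing.Theory Num.Theory.
Local Open Scope ring_scope.
Local Open Scope classical_set_scope.

Section QuantumDefs.
Variable R : realType.
Local Notation C := R[i].

Definition adjmx m n (X : 'M[C]_(m, n)) : 'M[C]_(n, m) := (map_mx Num.conj X)^T.

(* The columns of U form an orthonormal basis of C^m. *)
Definition onb m (U : 'M[C]_m) : Prop := adjmx U *m U = 1%:M.

Definition is_state k (rho : 'M[C]_k) : Prop :=
  [/\ adjmx rho = rho,
      (forall v : 'cV[C]_k, 0 <= (adjmx v *m rho *m v) 0 0)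
    & \tr rho = 1].

(* Trace norm ||X||_1 = Tr sqrt(X^dagger X) = sum of the square roots of the
   eigenvalues of the (positive semidefinite) matrix X^dagger X. *)
Definition trace_norm k (X : 'M[C]_k) : R :=
  \sum_(j < k) Num.sqrt (complex.Re (spectral_diag (adjmx X *m X) 0 j)).

(* l1-norm of X in the orthonormal basis given by the columns of W. *)
Definition l1_norm k (W X : 'M[C]_k) : R :=
  \sum_(a < k) \sum_(b < k) complex.Re `|(adjmx W *m X *m W) a b|.

Definition negativity k (tauG : 'M[C]_k) : R := (trace_norm tauG - 1) / 2.

Definition ket m (j : 'I_m) : 'cV[C]_m := delta_mx j 0.

(* Measurement isometry V_S : S -> S (x) S',  V_S |s_k> = |s_k>|k>,
   where |s_k> is the k-th column of U:  V_S = sum_k (|s_k> (x) |k>) <s_k|. *)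
Definition measV m (U : 'M[C]_m) : 'M[C]_(m * m, m) :=
  \sum_(j < m) ((col j U *t ket j) *m adjmx (col j U)).

(* Partial transpose on the primed subsystems A'B' of an operator on
   (A (x) A') (x) (B (x) B'), with A, A' of dim m and B, B' of dim n;
   index conventions are those of the Kronecker product *t. *)
Definition ptrans_primed m n (T : 'M[C]_((m * m) * (n * n))) :
    'M[C]_((m * m) * (n * n)) :=
  \matrix_(p, q)
    let pa := (mxtens_unindex (mxtens_unindex p).1) in
    let pb := (mxtens_unindex (mxtens_unindex p).2) in
    let qa := (mxtens_unindex (mxtens_unindex q).1) in
    let qb := (mxtens_unindex (mxtens_unindex q).2) in
    T (mxtens_index (mxtens_index (pa.1, qa.2), mxtens_index (pb.1, qb.2)))
      (mxtens_index (mxtens_index (qa.1, pa.2), mxtens_index (qb.1, pb.2))).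

Definition measured m n (UA : 'M[C]_m) (UB : 'M[C]_n) (rho : 'M[C]_(m * n)) :
    'M[C]_((m * m) * (n * n)) :=
  (measV UA *t measV UB) *m rho *m adjmx (measV UA *t measV UB).

Definition QN m n (rho : 'M[C]_(m * n)) : R :=
  inf [set x | exists (UA : 'M[C]_m) (UB : 'M[C]_n),
         [/\ onb UA, onb UB &
             x = negativity (ptrans_primed (measured UA UB rho))]].

Definition isCC m n (sigma : 'M[C]_(m * n)) : Prop :=
  exists (UA : 'M[C]_m) (UB : 'M[C]_n) (p : 'I_m -> 'I_n -> R),
    [/\ onb UA, onb UB,
        (forall i k, 0 <= p i k),
        \sum_(i < m) \sum_(k < n) p i k = 1 &
        sigma = \sum_(i < m) \sum_(k < n)
                  (((p i k)%:C)%C *: ((col i UA *m adjmx (col i UA))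
                                  *t (col k UB *m adjmx (col k UB))))].

Definition CC_l1_values m n (rho : 'M[C]_(m * n)) : set R :=
  [set x | exists (sigma : 'M[C]_(m * n)) (UA : 'M[C]_m) (UB : 'M[C]_n),
     [/\ isCC sigma, onb UA, onb UB,
         is_diag_mx (adjmx (UA *t UB) *m sigma *m (UA *t UB)) &
         x = l1_norm (UA *t UB) (rho - sigma) / 2]].

End QuantumDefs.

From HB Require Import structures.
From mathcomp Require Import all_boot all_order all_algebra.
From mathcomp Require Import complex mxtens spectral sesquilinear.
From mathcomp Require Import classical_sets reals.
From mathcomp Require Import ring.

(* Fix orthonormal bases UA, UB of A and B, put W = UA (x) UB and let rhoW be
   the matrix of rho in the product basis W.  The measured state has entries
   UA a a' UB b b' conj(UA c c' UB d d') rhoW(a'b', c'd'); after the partial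
   transpose on A'B' it factors as K diag(g) Z^dagger with K, Z unitary and g
   running over all entries of rhoW.  Hence its trace norm is the l1-norm of rho
   in W, and the negativity equals (||rho||_l1^W - 1)/2.
   Conversely, if sigma is diagonal in W then ||rho - sigma||_l1^W is at least
   ||rho||_l1^W minus the diagonal of rhoW, i.e. ||rho||_l1^W - 1, with equality
   for the dephasing of rho in W, which is classical-classical.  So every value on
   the right dominates a value on the left, and every value on the left occurs on
   the right. *)

Set Implicit Arguments.
Unset Strict Implicit.
Unset Printing Implicit Defensive.

Import Order.TTheory GRing.Theory Num.Theory.
Local Open Scope ring_scope.
Local Open Scope classical_set_scope.

Lemma inf_eq_subset_coinitial (R : realType) (A B : set R) :
  A !=set0 -> has_lbound A -> A `<=` B ->
  (forall y, B y -> exists2 x, A x & x <= y) -> inf A = inf B.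
Proof.
move=> A0 lA AB BA.
have B0 : B !=set0 by case: A0 => x /AB; exists x.
have lB : has_lbound B.
  case: lA => l lA; exists l => y /BA [x /lA lx xy]; exact: le_trans xy.
apply/le_anti/andP; split.
  refine (lb_le_inf B0 _) => y /BA [x Ax xy].
  exact: le_trans (ge_inf lA Ax) xy.
by refine (lb_le_inf A0 _) => x /AB Bx; exact: (ge_inf lB Bx).
Qed.

Lemma big_mxtens_index (V : nmodType) m n (F : 'I_(m * n) -> V) :
  \sum_(i < m * n) F i = \sum_(i < m) \sum_(j < n) F (mxtens_index (i, j)).
Proof.
rewrite pair_big /= (reindex (@mxtens_index m n)) /=.
  by apply: eq_bigr => -[i j].
by exists (@mxtens_unindex m n) => i _; rewrite (mxtens_indexK, mxtens_unindexK).
Qed.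

Lemma sumr_delta (R : pzSemiRingType) (I : finType) (a : I) (F : I -> R) :
  \sum_j (j == a)%:R * F j = F a.
Proof.
by rewrite (bigD1 a) //= eqxx mul1r big1 ?addr0 // => j /negbTE ->; rewrite mul0r.
Qed.

Lemma tensmx1 (R : comPzRingType) m n :
  (1%:M : 'M[R]_m) *t (1%:M : 'M[R]_n) = 1%:M.
Proof.
apply/matrixP => i j.
case: (mxtens_indexP i) => i1 i2; case: (mxtens_indexP j) => j1 j2.
rewrite tensmxE !mxE (inj_eq (can_inj (@mxtens_indexK m n))) xpair_eqE.
by case: (i1 == j1); case: (i2 == j2); rewrite /= ?mulr1 ?mulr0 ?mul0r.
Qed.

Lemma char_poly_similar (F : fieldType) n (P A B : 'M[F]_n) :
  P \in unitmx -> P *m A = B *m P -> char_poly A = char_poly B.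
Proof.
move=> Pu PA.
have : map_mx polyC P *m char_poly_mx A = char_poly_mx B *m map_mx polyC P.
  by rewrite /char_poly_mx mulmxBr mulmxBl -!map_mxM PA scalar_mxC.
move/(congr1 determinant); rewrite !det_mulmx det_map_mx /char_poly.
rewrite [_ * (\det P)%:P]mulrC => /mulfI; apply.
by rewrite polyC_eq0 -unitfE -unitmxE.
Qed.

Lemma char_poly_diag_mx (R : comNzRingType) n (d : 'rV[R]_n) :
  char_poly (diag_mx d) = \prod_(x <- [seq d 0 j | j <- enum 'I_n]) ('X - x%:P).
Proof.
rewrite char_poly_trig ?diag_mx_is_trig // big_map big_enum /=.
by apply: eq_bigr => j _; rewrite mxE eqxx mulr1n.
Qed.

Section UnitaryConjugation.
Variable C : numClosedFieldType.
Local Open Scope sesquilinear_scope.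

Lemma spectral_diag_unitary_conj n (Z : 'M[C]_n) (e : 'rV[C]_n) :
  Z \is unitarymx ->
  perm_eq [seq spectral_diag (Z ^t* *m diag_mx e *m Z) 0 j | j <- enum 'I_n]
          [seq e 0 j | j <- enum 'I_n].
Proof.
move=> Zu; set A := Z ^t* *m diag_mx e *m Z.
have Zunit := unitarymx_unit Zu.
have A_normal : A \is normalmx.
  by apply/orthomx_spectral_subproof; exists (Z, e); rewrite //= invmx_unitary.
have /orthomx_spectralP A_spectral := A_normal.
apply: prod_XsubC_eq; rewrite -!char_poly_diag_mx.
rewrite -(char_poly_similar (P := spectralmx A) (A := A)) ?spectral_unit //; last first.
  by rewrite {2}A_spectral !mulmxA mulmxV ?spectral_unit ?mul1mx.
rewrite (char_poly_similar (P := Z) (A := A) (B := diag_mx e)) //.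
by rewrite /A -invmx_unitary // !mulmxA mulmxV ?mul1mx.
Qed.

Lemma sum_spectral_diag_unitary_conj (V : nmodType) n (Z : 'M[C]_n)
    (e : 'rV[C]_n) (f : C -> V) : Z \is unitarymx ->
  \sum_j f (spectral_diag (Z ^t* *m diag_mx e *m Z) 0 j) = \sum_j f (e 0 j).
Proof.
move=> Zu; have := perm_big (x := 0 : V) (op := +%R) (P := xpredT) (F := f) _
  (spectral_diag_unitary_conj e Zu).
by rewrite !big_map -!enumT !big_enum.
Qed.

End UnitaryConjugation.

Section Adjoint.
Variable R : realType.
Local Notation C := R[i].

Lemma adjmxE m n (X : 'M[C]_(m, n)) i j : adjmx X i j = (X j i)^*.
Proof. by rewrite /adjmx !mxE. Qed.

Lemma adjmx_trmxC m n (X : 'M[C]_(m, n)) : adjmx X = (X ^t* )%sesqui.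
Proof. by apply/matrixP => i j; rewrite !mxE. Qed.

Lemma adjmxM m n p (A : 'M[C]_(m, n)) (B : 'M[C]_(n, p)) :
  adjmx (A *m B) = adjmx B *m adjmx A.
Proof. by rewrite /adjmx map_mxM trmx_mul. Qed.

Lemma adjmxK m n (A : 'M[C]_(m, n)) : adjmx (adjmx A) = A.
Proof. by apply/matrixP => i j; rewrite !adjmxE conjCK. Qed.

Lemma adjmx_diag n (c : 'rV[C]_n) : adjmx (diag_mx c) = diag_mx (map_mx Num.conj c).
Proof.
apply/matrixP => i j; rewrite adjmxE !mxE eq_sym.
by case: eqP => [->|_]; rewrite ?mulr1n ?mulr0n ?conjC0.
Qed.

Lemma adjmx_tens m n p q (A : 'M[C]_(m, n)) (B : 'M[C]_(p, q)) :
  adjmx (A *t B) = adjmx A *t adjmx B.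
Proof. by rewrite /adjmx map_mxT trmx_tens. Qed.

Lemma onb1 n : onb (1%:M : 'M[C]_n).
Proof. by rewrite /onb mulmx1; apply/matrixP => i j; rewrite adjmxE !mxE conjC_nat eq_sym. Qed.

Lemma onb_mulmx_adj n (U : 'M[C]_n) : onb U -> U *m adjmx U = 1%:M.
Proof. exact: mulmx1C. Qed.

Lemma onb_tens m n (A : 'M[C]_m) (B : 'M[C]_n) : onb A -> onb B -> onb (A *t B).
Proof. by rewrite /onb => hA hB; rewrite adjmx_tens tensmx_mul hA hB tensmx1. Qed.

Lemma onb_col_perm n (U : 'M[C]_n) (f : 'I_n -> 'I_n) : injective f ->
  onb U -> onb (\matrix_(i, j) U i (f j)).
Proof.
move=> f_inj /matrixP hU; apply/matrixP => j j'.
have := hU (f j) (f j'); rewrite !mxE (inj_eq f_inj) => <-.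
by apply: eq_bigr => i _; rewrite !adjmxE !mxE.
Qed.

Lemma adjmx_unitary n (U : 'M[C]_n) : onb U -> adjmx U \is unitarymx.
Proof. by move=> hU; apply/unitarymxP; rewrite -adjmx_trmxC adjmxK. Qed.

Lemma Re_normC_ge0 (c : C) : 0 <= complex.Re `|c|.
Proof. by rewrite normc_def /= sqrtr_ge0. Qed.

Lemma sqrt_Re_conjC_mul (c : C) : Num.sqrt (complex.Re (c^* * c)) = complex.Re `|c|.
Proof. by rewrite mulrC -sqr_normc -add_Re2_Im2 normc_def. Qed.

Lemma trace_norm_svd k (W Z : 'M[C]_k) (c : 'rV[C]_k) : onb W -> onb Z ->
  trace_norm (W *m diag_mx c *m adjmx Z) = \sum_j complex.Re `|c 0 j|.
Proof.
move=> hW hZ; rewrite /trace_norm.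
have diag_sq : diag_mx (map_mx Num.conj c) *m diag_mx c
             = diag_mx (\row_j ((c 0 j)^* * c 0 j)).
  apply/matrixP => i j; rewrite mul_diag_mx !mxE.
  by case: eqP => [->|]; rewrite ?mulr1n ?mulr0n ?mulr0.
have -> : adjmx (W *m diag_mx c *m adjmx Z) *m (W *m diag_mx c *m adjmx Z)
   = adjmx (adjmx Z) *m diag_mx (\row_j ((c 0 j)^* * c 0 j)) *m adjmx Z.
  rewrite !adjmxM adjmxK adjmx_diag !mulmxA -[_ *m adjmx W *m W]mulmxA hW mulmx1.
  by rewrite -[_ *m diag_mx c]mulmxA diag_sq.
rewrite [adjmx (adjmx Z)]adjmx_trmxC (sum_spectral_diag_unitary_conj _ (fun z => Num.sqrt (complex.Re z)))
  ?adjmx_unitary //.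
by apply: eq_bigr => j _; rewrite mxE sqrt_Re_conjC_mul.
Qed.

End Adjoint.

Lemma sumr_delta4 (R : pzSemiRingType) (I J K L : finType)
    (F : I -> J -> K -> L -> R) i0 j0 k0 l0 :
  \sum_i \sum_j \sum_k \sum_l
     ((i == i0)%:R * (j == j0)%:R * (k == k0)%:R * (l == l0)%:R * F i j k l)
  = F i0 j0 k0 l0.
Proof.
transitivity (\sum_i (i == i0)%:R * \sum_j (j == j0)%:R *
   \sum_k (k == k0)%:R * \sum_l (l == l0)%:R * F i j k l); last by rewrite !sumr_delta.
apply: eq_bigr => i _; rewrite mulr_sumr; apply: eq_bigr => j _.
rewrite !mulr_sumr; apply: eq_bigr => k _; rewrite !mulr_sumr; apply: eq_bigr => l _.
by rewrite !mulrA.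
Qed.

Section Measurement.
Variable R : realType.
Local Notation C := R[i].
Local Notation idx := mxtens_index.

Lemma measVE m (U : 'M[C]_m) a a' c : measV U (idx (a, a')) c = U a a' * (U c a')^*.
Proof.
rewrite /measV summxE (bigD1 a') //= big1 ?addr0.
  by rewrite !mxE big_ord1 !mxE !mxtens_indexK /= eqxx -val_eqE /= mulr1.
move=> i ne; rewrite !mxE big_ord1 !mxE !mxtens_indexK /= eq_sym (negbTE ne).
by rewrite mulr0 mul0r.
Qed.

Variables (m n : nat) (UA : 'M[C]_m) (UB : 'M[C]_n) (rho : 'M[C]_(m * n)).
Local Notation W := (UA *t UB).
Local Notation rhoW := (adjmx W *m rho *m W).

Lemma rhoWE u v : rhoW u v = \sum_y (\sum_x (W x u)^* * rho x y) * W y v.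
Proof.
rewrite !mxE; apply: eq_bigr => y _; rewrite !mxE; congr (_ * _).
by apply: eq_bigr => x _; rewrite adjmxE.
Qed.

Lemma tens_measVE a a' b b' x :
  (measV UA *t measV UB) (idx (idx (a, a'), idx (b, b'))) x
   = UA a a' * UB b b' * (W x (idx (a', b')))^*.
Proof.
case: (mxtens_indexP x) => c d.
by rewrite !tensmxE !measVE rmorphM /=; ring.
Qed.

Lemma measuredE a a' b b' c c' d d' :
  measured UA UB rho (idx (idx (a, a'), idx (b, b'))) (idx (idx (c, c'), idx (d, d')))
  = UA a a' * UB b b' * (UA c c' * UB d d')^* * rhoW (idx (a', b')) (idx (c', d')).
Proof.
rewrite /measured rhoWE mxE mulr_sumr.
under eq_bigr => y _ do rewrite adjmxE tens_measVE mxE.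
apply: eq_bigr => y _; rewrite !mulr_suml mulr_sumr; apply: eq_bigr => x _.
rewrite tens_measVE !rmorphM /= conjCK; ring.
Qed.

Lemma ptrans_measuredE a a' b b' c c' d d' :
  ptrans_primed (measured UA UB rho)
    (idx (idx (a, a'), idx (b, b'))) (idx (idx (c, c'), idx (d, d')))
  = UA a c' * UB b d' * (UA c a' * UB d b')^* * rhoW (idx (c', d')) (idx (a', b')).
Proof. by rewrite /ptrans_primed mxE !mxtens_indexK /= measuredE. Qed.

(* An SVD of the partially transposed measured state: its singular values are the
   moduli of the entries of [rhoW], the left singular vectors are the columns of
   [lsv] and the right ones those of [lsv] with primed and unprimed indices swapped. *)
Definition lsv : 'M[C]_((m * m) * (n * n)) :=
  (UA *t (1%:M : 'M[C]_m)) *t (UB *t (1%:M : 'M[C]_n)).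

Definition swap_primed (p : 'I_((m * m) * (n * n))) : 'I_((m * m) * (n * n)) :=
  let: (pa, pb) := (mxtens_unindex (mxtens_unindex p).1,
                    mxtens_unindex (mxtens_unindex p).2) in
  idx (idx (pa.2, pa.1), idx (pb.2, pb.1)).

Definition rsv : 'M[C]_((m * m) * (n * n)) := \matrix_(q, p) lsv q (swap_primed p).

Definition sv : 'rV[C]_((m * m) * (n * n)) :=
  \row_p let: (pa, pb) := (mxtens_unindex (mxtens_unindex p).1,
                           mxtens_unindex (mxtens_unindex p).2) in
         rhoW (idx (pa.1, pb.1)) (idx (pa.2, pb.2)).

Lemma lsvE a a' b b' s s' t t' :
  lsv (idx (idx (a, a'), idx (b, b'))) (idx (idx (s, s'), idx (t, t')))
  = UA a s * (a' == s')%:R * (UB b t * (b' == t')%:R).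
Proof. by rewrite /lsv !tensmxE !mxE. Qed.

Lemma swap_primedE s a t b :
  swap_primed (idx (idx (s, a), idx (t, b))) = idx (idx (a, s), idx (b, t)).
Proof. by rewrite /swap_primed !mxtens_indexK. Qed.

Lemma swap_primedK : involutive swap_primed.
Proof.
move=> p; case: (mxtens_indexP p) => u v.
by case: (mxtens_indexP u) => s a; case: (mxtens_indexP v) => t b; rewrite !swap_primedE.
Qed.

Lemma svE s a t b : sv 0 (idx (idx (s, a), idx (t, b))) = rhoW (idx (s, t)) (idx (a, b)).
Proof. by rewrite /sv mxE !mxtens_indexK. Qed.

Lemma ptrans_measured_svd :
  ptrans_primed (measured UA UB rho) = lsv *m diag_mx sv *m adjmx rsv.
Proof.
apply/matrixP => P Q.
case: (mxtens_indexP P) => u v; case: (mxtens_indexP u) => a a';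
case: (mxtens_indexP v) => b b'.
case: (mxtens_indexP Q) => u' v'; case: (mxtens_indexP u') => c c';
case: (mxtens_indexP v') => d d'.
rewrite ptrans_measuredE mul_mx_diag [RHS]mxE !big_mxtens_index.
under eq_bigr => s _ do under eq_bigr => s' _ do rewrite big_mxtens_index.
pose F s s' t t' := UA a s * UB b t * rhoW (idx (s, t)) (idx (s', t'))
                    * (UA c s' * UB d t')^*.
transitivity (F c' a' d' b'); first by rewrite /F; ring.
rewrite -(sumr_delta4 F c' a' d' b').
apply: eq_bigr => s _; apply: eq_bigr => s' _; apply: eq_bigr => t _; apply: eq_bigr => t' _.
rewrite (adjmxE rsv) [X in _ = X * _]mxE [rsv _ _]mxE swap_primedE !lsvE svE.
rewrite !rmorphM /= !conjC_nat /F (eq_sym a') (eq_sym b') (eq_sym c') (eq_sym d'); ring.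
Qed.

Lemma negativity_measured : onb UA -> onb UB ->
  negativity (ptrans_primed (measured UA UB rho)) = (l1_norm W rho - 1) / 2.
Proof.
move=> hA hB.
have lsv_onb : onb lsv by apply: onb_tens; apply: onb_tens => //; apply: onb1.
have rsv_onb : onb rsv by apply: onb_col_perm => //; apply: can_inj swap_primedK.
rewrite /negativity ptrans_measured_svd trace_norm_svd //; congr ((_ - 1) / 2).
rewrite /l1_norm !big_mxtens_index.
under eq_bigr => s _ do under eq_bigr => a _ do rewrite big_mxtens_index.
under [RHS]eq_bigr => s _ do under eq_bigr => t _ do rewrite big_mxtens_index.
apply: eq_bigr => s _; rewrite exchange_big /=.
by apply: eq_bigr => t _; apply: eq_bigr => a _; apply: eq_bigr => b _; rewrite svE.
Qed.

End Measurement.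

Section Dephasing.
Variable R : realType.
Local Notation C := R[i].
Variables (k : nat) (W rho : 'M[C]_k).
Local Notation rhoW := (adjmx W *m rho *m W).

Lemma l1_norm_ge0 : 0 <= l1_norm W rho.
Proof. by apply: sumr_ge0 => x _; apply: sumr_ge0 => y _; apply: Re_normC_ge0. Qed.

Definition dephase : 'M[C]_k := W *m diag_mx (\row_x rhoW x x) *m adjmx W.

Hypotheses (hW : onb W) (hrho : is_state rho).

Lemma rhoW_diag_ge0 x : 0 <= rhoW x x.
Proof.
case: hrho => _ rho_psd _; have := rho_psd (col x W).
suff -> : (adjmx (col x W) *m rho *m col x W) 0 0 = rhoW x x by [].
rewrite !mxE; apply: eq_bigr => y _; rewrite !mxE; congr (_ * _).
by apply: eq_bigr => z _; rewrite !mxE.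
Qed.

Lemma sum_Re_rhoW_diag : \sum_x complex.Re (rhoW x x) = 1.
Proof.
have <- : complex.Re (\tr rhoW) = 1.
  by rewrite mxtrace_mulC mulmxA onb_mulmx_adj // mul1mx; case: hrho => _ _ ->.
by rewrite raddf_sum.
Qed.

Lemma l1_norm_sub_offdiag :
  \sum_x \sum_y (complex.Re `|rhoW x y| - (y == x)%:R * complex.Re (rhoW x x))
  = l1_norm W rho - 1.
Proof.
rewrite -[in RHS]sum_Re_rhoW_diag /l1_norm -sumrB; apply: eq_bigr => x _.
by rewrite sumrB sumr_delta.
Qed.

Lemma l1_norm_sub_diag_ge (sigma : 'M[C]_k) :
  is_diag_mx (adjmx W *m sigma *m W) -> l1_norm W rho - 1 <= l1_norm W (rho - sigma).
Proof.
move=> /is_diag_mxP sigma_diag; rewrite -l1_norm_sub_offdiag /l1_norm mulmxBr mulmxBl.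
apply: ler_sum => x _; apply: ler_sum => y _; rewrite [in X in _ <= X]mxE.
have [->|yx] := eqVneq y x.
  by rewrite mul1r ger0_norm ?rhoW_diag_ge0 // subrr Re_normC_ge0.
by rewrite mul0r subr0 [(- (_ : 'M_k)) _ _]mxE sigma_diag ?subr0 // val_eqE eq_sym.
Qed.

Lemma dephase_diag : adjmx W *m dephase *m W = diag_mx (\row_x rhoW x x).
Proof. by rewrite /dephase !mulmxA hW mul1mx -mulmxA hW mulmx1. Qed.

Lemma l1_norm_sub_dephase : l1_norm W (rho - dephase) = l1_norm W rho - 1.
Proof.
rewrite -l1_norm_sub_offdiag /l1_norm mulmxBr mulmxBl dephase_diag.
apply: eq_bigr => x _; apply: eq_bigr => y _.
rewrite [in LHS]mxE [(- (_ : 'M_k)) _ _]mxE [diag_mx _ _ _]mxE [(\row__ _) _ _]mxE.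
have [->|yx] := eqVneq y x.
  by rewrite mulr1n mul1r subrr normr0 ger0_norm ?rhoW_diag_ge0 // subrr.
by rewrite mulr0n mul0r !subr0.
Qed.

End Dephasing.

Lemma isCC_dephase (R : realType) m n (UA : 'M[R[i]]_m) (UB : 'M[R[i]]_n)
    (rho : 'M[R[i]]_(m * n)) :
  onb UA -> onb UB -> is_state rho -> isCC (dephase (UA *t UB) rho).
Proof.
move=> hA hB hrho; have hW := onb_tens hA hB.
pose p i k := complex.Re ((adjmx (UA *t UB) *m rho *m (UA *t UB))
                            (mxtens_index (i, k)) (mxtens_index (i, k))).
exists UA, UB, p; split => //.
- by move=> i k; have := rhoW_diag_ge0 (UA *t UB) hrho (mxtens_index (i, k)); rewrite lecE => /andP[].
- by rewrite -[RHS](sum_Re_rhoW_diag hW hrho) big_mxtens_index.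
apply/matrixP => P Q.
case: (mxtens_indexP P) => p1 p2; case: (mxtens_indexP Q) => q1 q2.
rewrite /dephase mul_mx_diag mxE big_mxtens_index !summxE.
apply: eq_bigr => i _; rewrite summxE; apply: eq_bigr => k _.
rewrite /p RRe_real ?ger0_real ?rhoW_diag_ge0 // (adjmxE (UA *t UB)).
rewrite [X in X * _]mxE [(\row__ _) _ _]mxE [RHS]mxE !tensmxE !mxE !big_ord1 !mxE.
by rewrite rmorphM; ring.
Qed.

Theorem theorem9 (R : realType) (m n : nat) (rho : 'M[R[i]]_(m * n)) :
  is_state rho -> QN rho = inf (CC_l1_values rho).
Proof.
move=> hrho; have half_ge0 : 0 <= 2^-1 :> R by rewrite invr_ge0 ler0n.
apply: inf_eq_subset_coinitial.
- exists (negativity (ptrans_primed (measured 1%:M 1%:M rho))).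
  by exists 1%:M, 1%:M; split => //; apply: onb1.
- exists ((0 - 1) / 2) => _ [UA [UB [hA hB ->]]].
  by rewrite negativity_measured // ler_wpM2r // lerD2r l1_norm_ge0.
- move=> _ [UA [UB [hA hB ->]]]; have hW := onb_tens hA hB.
  exists (dephase (UA *t UB) rho), UA, UB; split => //.
  + exact: isCC_dephase.
  + by rewrite dephase_diag // diag_mx_is_diag.
  + by rewrite negativity_measured // l1_norm_sub_dephase.
- move=> _ [sigma [UA [UB [_ hA hB sigma_diag ->]]]].
  exists (negativity (ptrans_primed (measured UA UB rho))); first by exists UA, UB.
  rewrite negativity_measured // ler_wpM2r //.
  exact: l1_norm_sub_diag_ge (onb_tens hA hB) hrho _ sigma_diag.
Qed.
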